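(* Let $N$ be a binary orchard network with $k$ reticulations at the top, with horizontal arcs at the top $(x_1,y_1),\dots,(x_k,y_k)$, and let $t$ be an HGT-consistent labelling of $N$. Then $t(x_i)=t(y_i)$ for every $i\in\{1,\dots,k\}$.
   Context: A (directed phylogenetic) network on a finite taxa set $X$ is a directed acyclic graph without parallel arcs whose nodes are of the following types: a unique root (indegree 0, outdegree 1); tree nodes (indegree 1, outdegree at least 2); reticulations (indegree at least 2, outdegree 1); leaves (indegree 1, outdegree 0), the leaves being bijectively labelled by $X$. Non-leaf nodes are called internal. A network is binary if every tree node and every reticulation has total degree exactly 3. An arc $(u,v)$ is a reticulation arc if $v$ is a reticulation. A tree is a network without reticulations. Orchard networks: An ordered pair of leaves $(x,y)$ is a cherry if $x$ and $y$ have a common parent; it is a reticulated cherry if the parent $p_x$ of $x$ is a reticulation and $p_x$ and $y$ have a common parent. Let $p_x,p_y$ be the parents of $x,y$. Reducing $(x,y)$ in a network $N$: if $(x,y)$ is a cherry, delete $x$ and suppress $p_x$ if it now has indegree 1 and outdegree 1; if $(x,y)$ is a reticulated cherry, delete the arc $(p_y,p_x)$ and suppress any resulting node of indegree 1 and outdegree 1; otherwise do nothing. (Suppressing a node $v$ with one parent $u$ and one child $w$ means deleting $v$ and adding the arc $(u,w)$.) $N$ is orchard if some sequence of such reductions turns $N$ into a tree with exactly one leaf. HGT-consistent labelling: Let $N$ be a binary network with node set $V$. An HGT-consistent labelling of $N$ is a map $t:V\to\mathbb{R}$ such that (1) for every arc $(u,v)$, $t(u)\le t(v)$, and equality is allowed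 only if $v$ is a reticulation; (2) every internal node $u$ has a child $v$ with $t(u)<t(v)$; (3) for every reticulation $r$ with parents $u$ and $v$, exactly one of $t(u)=t(r)$ and $t(v)=t(r)$ holds. Reticulations at the top: Let $N$ be a binary orchard network and $v_\rho$ the child of the root. $N$ has $k$ reticulations at the top if it contains two directed paths $v_\rho,a_1,\dots,a_k$ and $v_\rho,b_1,\dots,b_k$ with all $a_i,b_j$ distinct, and $k$ reticulation arcs $(x_i,y_i)$, $i=1,\dots,k$, with $\{x_i,y_i\}=\{a_i,b_i\}$; moreover there is no arc between the child of $y_k$ and the child of $x_k$ other than $y_k$. The arcs $(x_i,y_i)$ are the horizontal arcs at the top (the lowest one being $(x_k,y_k)$), and $y_1,\dots,y_k$ are the reticulations at the top. *)

From HB Require Import structures.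
From mathcomp Require Import all_boot all_order all_algebra.
From mathcomp Require Import reals.
Set Implicit Arguments. Unset Strict Implicit. Unset Printing Implicit Defensive.
Import Order.TTheory GRing.Theory Num.Theory.

(* A (directed) graph with node type T : finType is given by a node set
   V : {set T} and an arc set A : {set (T * T)} (no parallel arcs). *)
Section Networks.
Variable T : finType.

Definition arc (A : {set T * T}) : rel T := fun u v => (u, v) \in A.
Definition parents (A : {set T * T}) (v : T) : {set T} := [set u | (u, v) \in A].
Definition children (A : {set T * T}) (v : T) : {set T} := [set w | (v, w) \in A].
Definition indeg (A : {set T * T}) (v : T) : nat := #|parents A v|.
Definition outdeg (A : {set T * T}) (v : T) : nat := #|children A v|.

(* Leaves are identified with the taxa. *)
Definition is_network (V : {set T}) (A : {set T * T}) : Prop :=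
  A \subset setX V V /\
  (forall u v, (u, v) \in A -> ~~ connect (arc A) v u) /\
  (exists! r, r \in V /\ indeg A r = 0) /\
  (forall v, v \in V -> indeg A v = 0 -> outdeg A v = 1) /\
  (forall v, v \in V -> indeg A v = 1 -> outdeg A v = 0 \/ 2 <= outdeg A v) /\
  (forall v, v \in V -> 2 <= indeg A v -> outdeg A v = 1).

Definition is_root (V : {set T}) (A : {set T * T}) (v : T) : Prop :=
  v \in V /\ indeg A v = 0.
Definition is_tree_node (V : {set T}) (A : {set T * T}) (v : T) : Prop :=
  v \in V /\ indeg A v = 1 /\ 2 <= outdeg A v.
Definition is_reticulation (V : {set T}) (A : {set T * T}) (v : T) : Prop :=
  v \in V /\ 2 <= indeg A v.
Definition is_leaf (V : {set T}) (A : {set T * T}) (v : T) : Prop :=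
  v \in V /\ indeg A v = 1 /\ outdeg A v = 0.
Definition is_internal (V : {set T}) (A : {set T * T}) (v : T) : Prop :=
  v \in V /\ 0 < outdeg A v.

Definition is_binary_network (V : {set T}) (A : {set T * T}) : Prop :=
  is_network V A /\
  (forall v, is_tree_node V A v -> indeg A v + outdeg A v = 3) /\
  (forall v, is_reticulation V A v -> indeg A v + outdeg A v = 3).

Definition is_one_leaf_tree (V : {set T}) (A : {set T * T}) : Prop :=
  is_network V A /\ (forall v, ~ is_reticulation V A v) /\
  #|[set v in V | (indeg A v == 1) && (outdeg A v == 0)]| = 1.

Definition suppress (G : {set T} * {set T * T}) (v : T) : {set T} * {set T * T} :=
  let V := G.1 in let A := G.2 in
  if (indeg A v == 1) && (outdeg A v == 1) then
    match [pick u in parents A v], [pick w in children A v] with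
    | Some u, Some w =>
        (V :\ v, [set a in A | (a.1 != v) && (a.2 != v)] :|: [set (u, w)])
    | _, _ => G
    end
  else G.

Inductive reduce_step : {set T} * {set T * T} -> {set T} * {set T * T} -> Prop :=
| reduce_cherry (V : {set T}) (A : {set T * T}) (x y px : T) :
    is_network V A -> x != y -> is_leaf V A x -> is_leaf V A y ->
    (px, x) \in A -> (px, y) \in A ->
    reduce_step (V, A) (suppress (V :\ x, A :\ (px, x)) px)
| reduce_ret_cherry (V : {set T}) (A : {set T * T}) (x y px py : T) :
    is_network V A -> x != y -> is_leaf V A x -> is_leaf V A y ->
    (px, x) \in A -> (py, y) \in A -> is_reticulation V A px ->
    (py, px) \in A ->
    reduce_step (V, A) (suppress (suppress (V, A :\ (py, px)) py) px).

Inductive reduces : {set T} * {set T * T} -> {set T} * {set T * T} -> Prop :=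
| reduces_refl G : reduces G G
| reduces_step G1 G2 G3 : reduce_step G1 G2 -> reduces G2 G3 -> reduces G1 G3.

Definition is_orchard (V : {set T}) (A : {set T * T}) : Prop :=
  exists G', reduces (V, A) G' /\ is_one_leaf_tree G'.1 G'.2.

Definition HGT_consistent (R : realType) (V : {set T}) (A : {set T * T})
    (t : T -> R) : Prop :=
  [/\ (forall u v, (u, v) \in A -> (t u <= t v)%R /\ (t u = t v -> is_reticulation V A v)),
      (forall u, is_internal V A u -> exists v, (u, v) \in A /\ (t u < t v)%R)
    & (forall r u v, is_reticulation V A r -> u != v -> (u, r) \in A -> (v, r) \in A ->
         (t u == t r) != (t v == t r))].

(* N has k reticulations at the top, witnessed by paths a_1..a_k, b_1..b_k
   (indices 1..k) starting at the child vrho of the root, and horizontal arcs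
   (x_i, y_i), i = 1..k.  Requires k >= 1. *)
Definition ret_at_top (V : {set T}) (A : {set T * T}) (k : nat)
    (a b x y : nat -> T) : Prop :=
  0 < k /\
  exists rho vrho : T,
    [/\ is_root V A rho /\ (rho, vrho) \in A,
        (vrho, a 1%N) \in A /\ (vrho, b 1%N) \in A,
        (forall i, (1 <= i < k)%N -> (a i, a i.+1) \in A /\ (b i, b i.+1) \in A),
        (forall i j, (1 <= i <= k)%N -> (1 <= j <= k)%N ->
           a i != b j /\ (i != j -> a i != a j /\ b i != b j))
      & ((forall i, (1 <= i <= k)%N ->
           [/\ (x i = a i /\ y i = b i) \/ (x i = b i /\ y i = a i),
               (x i, y i) \in A & is_reticulation V A (y i)]) /\
        (forall c d, (y k, c) \in A -> (x k, d) \in A -> d != y k ->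
           ~ ((c, d) \in A \/ (d, c) \in A)))].

End Networks.

From HB Require Import structures.
From mathcomp Require Import all_boot all_order all_algebra.
From mathcomp Require Import reals.
Import Order.TTheory GRing.Theory Num.Theory.
Set Implicit Arguments.
Unset Strict Implicit.
Unset Printing Implicit Defensive.
Local Open Scope ring_scope.

(* Labels are monotone along arcs, and at a reticulation exactly one parent
   carries its label.  If a horizontal arc (x, y) had t x < t y, the other
   parent p of y would satisfy t p = t y.  But p and the parent q of x are the
   two ends of the previous rung of the ladder, which carry equal labels by
   induction (the first rung hangs from the single node v_rho), so
   t y = t p = t q <= t x < t y. *)

Section HorizontalArcs.
Variables (T : finType) (V : {set T}) (A : {set T * T}).

Lemma network_arc_neq u v : is_network V A -> (u, v) \in A -> u != v.
Proof.
move=> [_ [acyclic _]] uv; apply/eqP => eq_uv.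
by have := acyclic _ _ uv; rewrite eq_uv connect0.
Qed.

Variables (R : realType) (t : T -> R).
Hypothesis t_HGT : HGT_consistent V A t.

Lemma HGT_label_arc u v : (u, v) \in A -> t u <= t v.
Proof. by case: t_HGT => mono _ _ /mono[]. Qed.

Lemma HGT_horizontal_arc u v p q :
  (u, v) \in A -> is_reticulation V A v -> (p, v) \in A -> p != u ->
  (q, u) \in A -> t p = t q -> t u = t v.
Proof.
move=> uv ret_v pv p_neq_u qu tp_tq.
case: t_HGT => _ _ /(_ v u p ret_v); rewrite eq_sym => /(_ p_neq_u uv pv).
case: (eqVneq (t u) (t v)) => // _ /negPn/eqP tp_tv.
apply/eqP; rewrite eq_le HGT_label_arc //= -tp_tv tp_tq.
exact: HGT_label_arc.
Qed.

Lemma HGT_rung_labels u1 u2 p1 p2 xr yr :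
  (p1, u1) \in A -> (p2, u2) \in A -> p1 != u2 -> p2 != u1 -> t p1 = t p2 ->
  (xr = u1 /\ yr = u2) \/ (xr = u2 /\ yr = u1) ->
  (xr, yr) \in A -> is_reticulation V A yr -> t u1 = t u2.
Proof.
move=> p1u1 p2u2 p1_neq_u2 p2_neq_u1 tp12 [[-> ->]|[-> ->]] horiz ret.
- exact: (HGT_horizontal_arc horiz ret p2u2 p2_neq_u1 p1u1 (esym tp12)).
- exact/esym/(HGT_horizontal_arc horiz ret p1u1 p1_neq_u2 p2u2 tp12).
Qed.

Lemma ret_at_top_rung_labels k a b x y :
  is_network V A -> ret_at_top V A k a b x y ->
  forall i, (1 <= i <= k)%N -> t (a i) = t (b i).
Proof.
move=> netN [_ [rho [vrho [_ [va1 vb1] ladder distinct [horizontal _]]]]].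
elim=> [//|[_ le1k|i IH /andP[_ ltik]]].
  have [xy1 horiz ret] := horizontal 1%N le1k.
  by apply: (HGT_rung_labels va1 vb1 _ _ _ xy1 horiz ret);
    rewrite ?network_arc_neq.
have le_i : (1 <= i.+1 <= k)%N by rewrite (ltnW ltik).
have le_Si : (1 <= i.+2 <= k)%N by [].
have [xy horiz ret] := horizontal _ le_Si.
have [aa bb] := ladder i.+1 ltik.
have [ab _] := distinct _ _ le_i le_Si.
have [ba _] := distinct _ _ le_Si le_i.
by apply: (HGT_rung_labels aa bb ab _ (IH le_i) xy horiz ret); rewrite eq_sym.
Qed.

End HorizontalArcs.

Theorem mainTheorem9 (T : finType) (V : {set T}) (A : {set T * T})
    (R : realType) (t : T -> R) (k : nat) (a b x y : nat -> T) :
  is_binary_network V A -> is_orchard V A ->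
  ret_at_top V A k a b x y ->
  HGT_consistent V A t ->
  forall i : nat, (1 <= i <= k)%N -> t (x i) = t (y i).
Proof.
move=> [netN _] _ topN t_HGT i le_ik.
have rung := ret_at_top_rung_labels t_HGT netN topN le_ik.
case: topN => _ [_ [_ [_ _ _ _ [horizontal _]]]].
by have [[[-> ->]|[-> ->]] _ _] := horizontal i le_ik.
Qed.
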